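(* Let $X$ be a CRSM on $E$ with extremal coefficient functional $\theta$, and let $K,K_1,K_2,\ldots\in\mathcal K$. Then $X(K_n)\to X(K)$ in probability as $n\to\infty$ if and only if $\theta(K_n)\to\theta(K)$ and $\theta(K_n\cup K)\to\theta(K)$.
   Context: $E$ is a locally compact Hausdorff second countable space; $\mathcal K$ its compact subsets. A sup-measure on $E$ is a Choquet capacity $\varphi$ (non-decreasing, $\varphi(\emptyset)=0$, $\varphi(A_n)\uparrow\varphi(A)$ if $A_n\uparrow A$, $\varphi(K_n)\downarrow\varphi(K)$ for compact $K_n\downarrow K$), finite on compacts, with $\varphi(\bigcup_j G_j)=\sup_j\varphi(G_j)$ for all families of open sets; a random sup-measure is a random element of the space of sup-measures (Borel $\sigma$-algebra of the sup-vague topology). $\mathrm{USC}$: bounded non-negative upper semicontinuous functions with relatively compact support. Extremal integral $\int^e f\,d\varphi=\sup\{\varphi(K)\inf_{x\in K}f(x):K\in\mathcal K\}$. Unit Fréchet with scale $a\ge0$: distribution function $\exp(-a/t)$, $t>0$. $X$ is max-stable if $\bigvee_iu_iX(K_i)$ is unit Fréchet for all $K_i\in\mathcal K$, $u_i\ge0$; tail dependence functional $\ell(f)$ = scale of $\int^e f\,dX$; extremal coefficient functional $\theta(K)=\ell(\mathbf 1_K)$. $X$ is a CRSM if it is max-stable and $\ell(f+g)=\ell(f)+\ell(g)$ for all $f,g\in\mathrm{USC}$ with $(f(x)-f(y))(g(x)-g(y))\ge0$ for all $x,y$. *)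

From HB Require Import structures.
From mathcomp Require Import all_boot all_order all_algebra.
From mathcomp Require Import all_classical all_reals all_analysis.
From mathcomp Require Import measurable_realfun.
Set Implicit Arguments. Unset Strict Implicit. Unset Printing Implicit Defensive.
Import Order.TTheory GRing.Theory Num.Theory.
Import numFieldNormedType.Exports.
Local Open Scope classical_set_scope.
Local Open Scope ring_scope.

Section Defs.
Context {R : realType} {E : topologicalType}.

Definition lchs_space : Prop :=
  [/\ locally_compact [set: E], hausdorff_space E & @second_countable E].

Definition sup_measure (phi : set E -> \bar R) : Prop :=
  [/\ (forall A B, A `<=` B -> (phi A <= phi B)%E),
      phi set0 = 0%E,
      (forall (A : nat -> set E) (B : set E),
          (forall n, A n `<=` A n.+1) -> (\bigcup_n A n) = B ->
          phi \o A @ \oo --> phi B),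
      (forall (K : nat -> set E) (L : set E),
          (forall n, compact (K n)) -> (forall n, K n.+1 `<=` K n) ->
          (\bigcap_n K n) = L -> phi \o K @ \oo --> phi L) &
      (forall K, compact K -> (phi K < +oo)%E) /\
      (forall F : set (set E), F `<=` open -> F !=set0 ->
          phi (\bigcup_(G in F) G) = ereal_sup (phi @` F))].

(* random sup-measure: each realization is a sup-measure and X is measurable
   for the Borel sigma-algebra of the sup-vague topology, i.e. the
   evaluations at compact and at open sets are measurable *)
Definition random_sup_measure {d} {T : measurableType d}
  (X : T -> set E -> \bar R) : Prop :=
  [/\ (forall w, sup_measure (X w)),
      (forall K, compact K -> measurable_fun setT (fun w => X w K)) &
      (forall G, open G -> measurable_fun setT (fun w => X w G))].

Definition frechet_scale {d} {T : measurableType d} (P : probability T R)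
  (Y : T -> \bar R) (a : R) : Prop :=
  [/\ measurable_fun setT Y, 0 <= a &
      forall t : R, 0 < t ->
        P [set w | (Y w <= t%:E)%E] = (expR (- (a / t)))%:E].

Definition USC (f : E -> R) : Prop :=
  [/\ (exists M : R, forall x, f x <= M),
      (forall x, 0 <= f x),
      (forall t : R, open [set x | f x < t]) &
      compact (closure [set x | f x != 0])].

Definition ext_integral (f : E -> R) (phi : set E -> \bar R) : \bar R :=
  ereal_sup [set (phi K * ereal_inf ((fun x => (f x)%:E) @` K))%E
            | K in [set K : set E | compact K]].

Definition max_stable {d} {T : measurableType d} (P : probability T R)
  (X : T -> set E -> \bar R) : Prop :=
  forall (n : nat) (K : 'I_n -> set E) (u : 'I_n -> R),
    (forall i, compact (K i)) -> (forall i, 0 <= u i) ->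
    exists a, frechet_scale P
      (fun w => \big[Order.max/0%E]_(i < n) ((u i)%:E * X w (K i))%E) a.

Definition tdf {d} {T : measurableType d} (P : probability T R)
  (X : T -> set E -> \bar R) (f : E -> R) : R :=
  xget 0 [set a | frechet_scale P (fun w => ext_integral f (X w)) a].

Definition ecf {d} {T : measurableType d} (P : probability T R)
  (X : T -> set E -> \bar R) (K : set E) : R :=
  tdf P X (\1_K).

Definition CRSM {d} {T : measurableType d} (P : probability T R)
  (X : T -> set E -> \bar R) : Prop :=
  [/\ random_sup_measure X, max_stable P X &
      forall f g, USC f -> USC g ->
        (forall x y, 0 <= (f x - f y) * (g x - g y)) ->
        tdf P X (f \+ g) = tdf P X f + tdf P X g].

Definition cvg_in_prob {d} {T : measurableType d} (P : probability T R)
  (Y : nat -> T -> R) (Z : T -> R) : Prop :=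
  forall eps : R, 0 < eps ->
    (fun n => P [set w | eps < `|Y n w - Z w|]) @ \oo --> 0%E.

End Defs.

From HB Require Import structures.
From mathcomp Require Import all_boot all_order all_algebra.
From mathcomp Require Import all_classical all_reals all_analysis.
From mathcomp Require Import measurable_realfun.
From mathcomp Require Import ring lra.
Set Implicit Arguments.
Unset Strict Implicit.
Unset Printing Implicit Defensive.
Import Order.TTheory GRing.Theory Num.Theory.
Import numFieldNormedType.Exports.
Local Open Scope classical_set_scope.
Local Open Scope ring_scope.

(* For compact K, Y := X(K) is unit Frechet with scale theta(K) (take f = 1_K
   in the extremal integral), and on compact sets each realization of X is
   maxitive: X(K u L) <= max (X K, X L), which follows from sup-additivity on
   open sets by approximating K and L from outside by compact neighbourhoods.
   Put Y_n := X(K_n), Y := X(K), Z_n := X(K_n u K) >= max (Y_n, Y).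
   If Y_n -> Y in probability, so does Z_n (as 0 <= Z_n - Y <= |Y_n - Y|), and
   convergence in probability forces the Frechet scales to converge.
   Conversely, if V <= Z are Frechet with scales a and c, then
   P(V <= t < Z) = exp(-a/t) - exp(-c/t) <= |a - c| / t, and an eps-gap
   between V and Z straddles a point of a finite grid unless Z is large;
   so Z_n - Y and Z_n - Y_n tend to 0 in probability once all three scales
   have the same limit, and |Y_n - Y| is dominated by these two gaps. *)

Section CompactApproximation.
Context {E : topologicalType}.

Lemma compact_open_compact_between (A : set E) :
  locally_compact [set: E] -> compact A ->
  exists U W, [/\ open U, compact W, A `<=` U & U `<=` W].
Proof.
move=> lcE cA.
have /choice[V hV] : forall x : E, exists V, nbhs x V /\ compact V.
  by move=> x; have [V + [cV _]] := lcE x I; rewrite withinET; exists V.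
(* A finite subcover of the (V x)°, via near-covering compactness. *)
pose F := filter_from [set: seq E] (fun s => [set s' : seq E | {subset s <= s'}]).
have FF : Filter F.
  apply: filter_from_filter => [|s1 s2 _ _]; first by exists [::].
  exists (s1 ++ s2) => // s /= s12s.
  by split=> y ys; apply: s12s; rewrite mem_cat ys ?orbT.
have [|s _ /(_ s (fun _ => id)) As] := (compact_near_coveringP A).1 cA (seq E) F
    (fun s x => exists2 y, y \in s & (V y)° x) FF.
  move=> x Ax; exists ((V x)°, [set s : seq E | {subset [:: x] <= s}]).
    by split; [exact/nbhs_interior/(hV x).1|exists [:: x]].
  by case=> x' s [/= Vx' xs]; exists x => //; apply: xs; exact: mem_head.
exists (\bigcup_(y in [set` s]) (V y)°), (\big[setU/set0]_(y <- s) V y); split.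
- by apply: bigcup_open => y _; exact: open_interior.
- by apply: bigsetU_compact => y _; exact: (hV y).2.
- by move=> x /As[y ys Vy]; exists y.
- by rewrite -bigcup_seq; apply: subset_bigcup => y _; exact: interior_subset.
Qed.

Lemma basis_closure_disjoint (B : set (set E)) (A : set E) x :
  locally_compact [set: E] -> hausdorff_space E -> basis B -> closed A ->
  ~ A x -> exists b, [/\ B b, b x & closure b `&` A = set0].
Proof.
move=> lcE hE [_ Bx] clA nAx.
have [V + [cV _]] := lcE x I; rewrite withinET => Vx.
have nAx' : nbhs x (~` A).
  by apply: open_nbhs_nbhs; split => //; exact: closed_openC.
have [M Mx clM] := compact_regular hE cV Vx nAx'.
have [b [Bb bx] bM] := Bx x M Mx.
by exists b; split => //; apply/seteqP; split => // y [/(closureS bM)/clM].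
Qed.

Lemma compact_decreasing_approx (A : set E) :
  locally_compact [set: E] -> hausdorff_space E -> @second_countable E ->
  compact A ->
  exists C G : nat -> set E,
    [/\ forall n, compact (C n), forall n, open (G n),
        forall n, A `<=` G n /\ G n `<=` C n, forall n, C n.+1 `<=` C n &
        \bigcap_n C n = A].
Proof.
move=> lcE hE [B cB bB] cA; have Bo := bB.1.
have [U [W [oU cW AU UW]]] := compact_open_compact_between lcE cA.
have /pcard_surjP[e Be] := cB.
(* Stage n removes the sets e 0, ..., e n.-1 whose closure misses A; as e may
   leave B, Q uses interiors to stay closed. *)
pose far b := closure b `&` A == set0.
pose O b := if far b then ~` closure b else setT.
pose Q b := if far b then ~` b° else setT.
pose G n := U `&` \big[setI/setT]_(k < n) O (e k).
pose C n := W `&` \big[setI/setT]_(k < n) Q (e k).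
have AO b : A `<=` O b.
  rewrite /O /far; case: eqP => // Ab0 x Ax clbx.
  by have : (closure b `&` A) x by []; rewrite Ab0.
have OQ b : O b `<=` Q b.
  rewrite /O /Q; case: ifP => // _; apply: subsetC.
  exact: subset_trans (@interior_subset _ _) (@subset_closure _ _).
have AG n : A `<=` \big[setI/setT]_(k < n) O (e k).
  apply: (big_ind (fun S => A `<=` S)) => [//|S S' AS AS' x Ax|k _]; last exact: AO.
  by split; [exact: AS|exact: AS'].
have GC n : \big[setI/setT]_(k < n) O (e k) `<=` \big[setI/setT]_(k < n) Q (e k).
  apply: (big_ind2 (fun S S' => S `<=` S')) => [//|? ? ? ? ? ?|k _]; last exact: OQ.
  exact: setISS.
exists C, G; split.
- move=> n; apply: compact_closedI cW _; apply: big_ind => //; first exact: closedI.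
  move=> k _; rewrite /Q; case: ifP => _ //.
  exact: open_closedC (@open_interior _ _).
- move=> n; apply: openI oU _; apply: big_ind; [exact: openT|exact: openI|].
  move=> k _; rewrite /O; case: ifP => _; last exact: openT.
  exact: closed_openC (@closed_closure _ _).
- move=> n; split; last exact: setISS.
  by move=> x Ax; split; [exact: AU|exact: AG].
- by move=> n; rewrite /C big_ord_recr => x [Wx [Cx _]].
apply/seteqP; split => [x Cx|x Ax n _]; last first.
  by split; [exact/UW/AU|exact: GC (AG n x Ax)].
apply: contrapT => nAx.
have [b [Bb bx /eqP farb]] :=
  basis_closure_disjoint lcE hE bB (compact_closed hE cA) nAx.
have [k _ ekb] := Be b Bb.
have [_] := Cx k.+1 I; rewrite big_ord_recr => -[_].
rewrite /Q ekb /far farb; apply.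
by move: bx; rewrite -[in X in X -> _]((interior_id b).1 (Bo b Bb)).
Qed.

End CompactApproximation.

Section SupMeasure.
Context {R : realType} {E : topologicalType} (phi : set E -> \bar R).
Hypothesis phi_sup : sup_measure phi.

Lemma sup_measure_ge0 A : (0 <= phi A)%E.
Proof. by case: phi_sup => mono phi0 _ _ _; rewrite -phi0 mono. Qed.

Lemma sup_measure_fin_num K : compact K -> phi K \is a fin_num.
Proof.
case: phi_sup => _ _ _ _ [fin _] cK.
by rewrite ge0_fin_numE ?fin ?sup_measure_ge0.
Qed.

Lemma sup_measure_openU G1 G2 : open G1 -> open G2 ->
  phi (G1 `|` G2) = maxe (phi G1) (phi G2).
Proof.
case: phi_sup => _ _ _ _ [_ sup] oG1 oG2.
have -> : G1 `|` G2 = \bigcup_(G in [set G1; G2]) G.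
  apply/seteqP; split => [x [G1x|G2x]|x [G [->|->] Gx]].
  - by exists G1; [left|].
  - by exists G2; [right|].
  - by left.
  - by right.
rewrite sup; [|by move=> G [->|->]|by exists G1; left].
apply/eqP; rewrite eq_le; apply/andP; split.
  by apply: ge_ereal_sup => _ [G [->|->] <-]; rewrite le_max lexx ?orbT.
rewrite ge_max; apply/andP; split; apply: ereal_sup_ubound.
  by exists G1; [left|].
by exists G2; [right|].
Qed.

Lemma sup_measure_compactU A B :
  locally_compact [set: E] -> hausdorff_space E -> @second_countable E ->
  compact A -> compact B -> (phi (A `|` B) <= maxe (phi A) (phi B))%E.
Proof.
move=> lcE hE scE cA cB; case: (phi_sup) => mono _ _ down _.
have [CA [GA [cCA oGA AGC dCA iCA]]] := compact_decreasing_approx lcE hE scE cA.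
have [CB [GB [cCB oGB BGC dCB iCB]]] := compact_decreasing_approx lcE hE scE cB.
have le_approx n : (phi (A `|` B) <= maxe (phi (CA n)) (phi (CB n)))%E.
  apply: (@le_trans _ _ (phi (GA n `|` GB n))).
    by apply: mono; apply: setUSS; [exact: (AGC n).1|exact: (BGC n).1].
  rewrite sup_measure_openU //; apply: le_max2; apply: mono.
    exact: (AGC n).2.
  exact: (BGC n).2.
rewrite leNgt; apply/negP; rewrite gt_max => /andP[ltA ltB].
have ltAn : \forall n \near \oo, (phi (CA n) < phi (A `|` B))%E.
  exact: down CA A cCA dCA iCA _ (open_ereal_lt' ltA).
have ltBn : \forall n \near \oo, (phi (CB n) < phi (A `|` B))%E.
  exact: down CB B cCB dCB iCB _ (open_ereal_lt' ltB).
have [n [/= ltAn' ltBn']] := filter_ex (filterI ltAn ltBn).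
by have := le_approx n; rewrite leNgt gt_max ltAn' ltBn'.
Qed.

Lemma ext_integral_indic K : compact K -> ext_integral (\1_K) phi = phi K.
Proof.
case: phi_sup => mono phi0 _ _ _ cK.
have inf_indic C : C `<=` K -> C !=set0 ->
    ereal_inf [set (\1_K x : R)%:E | x in C] = 1%E.
  move=> CK [x0 Cx0]; rewrite [X in ereal_inf X](_ : _ = [set 1%E]) ?ereal_inf1 //.
  have indic1 x : C x -> (\1_K x : R)%:E = 1%E.
    by move=> /CK Kx; rewrite indicE mem_set.
  apply/seteqP; split => [_ [x Cx <-]|_ ->]; first by rewrite /= indic1.
  by exists x0; last exact: indic1.
apply/eqP; rewrite eq_le; apply/andP; split.
- apply: ge_ereal_sup => _ [C cC <-].
  have [CK|/existsNP[x /not_implyP[Cx nKx]]] := pselect (C `<=` K).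
    have [->|/set0P C0] := eqVneq C set0.
      by rewrite phi0 mul0e sup_measure_ge0.
    by rewrite inf_indic // mule1 mono.
  suff -> : ereal_inf [set (\1_K x : R)%:E | x in C] = 0%E.
    by rewrite mule0 sup_measure_ge0.
  apply/eqP; rewrite eq_le; apply/andP; split.
    by apply: ereal_inf_lbound; exists x => //; rewrite indicE memNset.
  by apply/ereal_infP => _ [y _ <-]; rewrite lee_fin indicE.
- apply: ereal_sup_ubound; exists K => //.
  have [->|/set0P K0] := eqVneq K set0; first by rewrite phi0 mul0e.
  by rewrite inf_indic ?mule1.
Qed.

End SupMeasure.

Lemma expRN_sub_le_dist {R : realType} (u v : R) : 0 <= u -> 0 <= v ->
  expR (- u) - expR (- v) <= `|u - v|.
Proof.
move=> u0 v0; have [vu|uv] := leP v u.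
  have : expR (- u) <= expR (- v) by rewrite ler_expR lerN2.
  by move=> le_uv; apply: le_trans (normr_ge0 _); lra.
have expvE : expR (- v) = expR (- u) * expR (- (v - u)).
  by rewrite -expRD; congr expR; ring.
have expB := expR_ge1Dx (- (v - u)).
have expu1 : expR (- u) <= 1 by rewrite expR_le1; lra.
have expu0 := expR_gt0 (- u).
by rewrite expvE ltr0_norm ?subr_lt0 //; nra.
Qed.

Lemma grid_point_between {R : realType} (v z dl eps : R) (N : nat) :
  0 <= v -> 0 < dl -> dl < eps -> v + eps < z -> z <= N%:R * dl ->
  exists2 k : 'I_N, v <= k.+1%:R * dl & k.+1%:R * dl < z.
Proof.
move=> v0 dl0 dleps vz zN.
have /andP[kv vk] := truncn_itv (divr_ge0 v0 (ltW dl0)).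
set k := Num.truncn _ in kv vk.
rewrite ler_pdivlMr // in kv; rewrite ltr_pdivrMr // in vk.
have kN : (k < N)%N by rewrite -(ltr_nat R) -(ltr_pM2r dl0); lra.
by exists (Ordinal kN); rewrite /= -natr1 mulrDl mul1r in vk *; lra.
Qed.

Section RealRandomVariables.
Context {R : realType} {d : measure_display} {T : measurableType d}
  (P : probability T R).
Implicit Types (A B C : set T) (V W Z : T -> R).

Lemma measurable_le_cst W t : measurable_fun setT W ->
  measurable [set w | W w <= t].
Proof.
by move=> mW; rewrite -[X in measurable X]setTI; exact: measurable_fun_le.
Qed.

Lemma measurable_cst_lt W t : measurable_fun setT W ->
  measurable [set w | t < W w].
Proof.
move=> mW; rewrite [X in measurable X](_ : _ = ~` [set w | W w <= t]).
  exact/measurableC/measurable_le_cst.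
by apply/seteqP; split => w /=; rewrite ltNge => /negP.
Qed.

Lemma measurable_fun_normB V W : measurable_fun setT V -> measurable_fun setT W ->
  measurable_fun setT (fun w => `|V w - W w|).
Proof.
move=> mV mW; apply: measurableT_comp (@normr_measurable R setT) _.
exact: measurable_funB.
Qed.

Lemma fine_measure_ge0 A : 0 <= fine (P A).
Proof. exact/fine_ge0/measure_ge0. Qed.

Lemma fine_measureK A : measurable A -> (fine (P A))%:E = P A.
Proof. by move=> mA; rewrite fineK ?fin_num_measure. Qed.

Lemma fine_le_measure A B : measurable A -> measurable B -> A `<=` B ->
  fine (P A) <= fine (P B).
Proof.
move=> mA mB AB; rewrite -lee_fin !fine_measureK //.
by apply: le_measure; rewrite ?inE.
Qed.

Lemma fine_measureU2_le A B : measurable A -> measurable B ->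
  fine (P (A `|` B)) <= fine (P A) + fine (P B).
Proof.
move=> mA mB; rewrite -lee_fin EFinD !fine_measureK //; first exact: measureU2.
exact: measurableU.
Qed.

Lemma fine_measure_le_subU A B C :
  measurable A -> measurable B -> measurable C -> A `<=` B `|` C ->
  fine (P A) <= fine (P B) + fine (P C).
Proof.
move=> mA mB mC ABC; apply: le_trans (fine_measureU2_le mB mC).
by apply: fine_le_measure => //; exact: measurableU.
Qed.

Lemma fine_measureU A B : measurable A -> measurable B -> A `&` B = set0 ->
  fine (P (A `|` B)) = fine (P A) + fine (P B).
Proof.
move=> mA mB AB0; apply: EFin_inj; rewrite EFinD !fine_measureK ?measureU //.
exact: measurableU.
Qed.

Lemma fine_measure_bigsetU_le (F : nat -> set T) N : (forall k, measurable (F k)) ->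
  fine (P (\big[setU/set0]_(k < N) F k)) <= \sum_(k < N) fine (P (F k)).
Proof.
move=> mF; elim: N => [|N IH]; first by rewrite !big_ord0 measure0.
rewrite !big_ord_recr /=.
apply: le_trans (fine_measureU2_le (bigsetU_measurable _ _) _) _ => //.
by rewrite lerD2r.
Qed.

Lemma cvg_in_probP Wn W : (forall n, measurable_fun setT (Wn n)) ->
  measurable_fun setT W ->
  cvg_in_prob P Wn W <-> forall eps, 0 < eps ->
    (fun n => fine (P [set w | eps < `|Wn n w - W w|])) @ \oo --> 0.
Proof.
move=> mWn mW; split=> [Wcvg eps eps0|Wcvg eps eps0].
  by have /fine_cvgP[] := Wcvg eps eps0.
apply/fine_cvgP; split; last exact: Wcvg.
apply: nearW => n; rewrite fin_num_measure //.
exact/measurable_cst_lt/measurable_fun_normB.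
Qed.

Lemma cvg_in_prob_cdf Wn W t : (forall n, measurable_fun setT (Wn n)) ->
  measurable_fun setT W -> cvg_in_prob P Wn W ->
  {for t, continuous (fun s => fine (P [set w | W w <= s]))} ->
  (fun n => fine (P [set w | Wn n w <= t])) @ \oo --> fine (P [set w | W w <= t]).
Proof.
move=> mWn mW /(cvg_in_probP mWn mW) Wcvg Fcont.
set F := fun s => fine (P [set w | W w <= s]).
apply/cvgrPdist_lt => eta eta0.
have eta20 : 0 < eta / 2 by lra.
have [e e0 Fe] := (cvgrPdist_lt _ _).1 Fcont (eta / 2) eta20.
have e20 : 0 < e / 2 by exact: divr_gt0.
have Fl : `|F t - F (t - e / 2)| < eta / 2.
  apply: Fe; rewrite /ball_ /= opprB addrC subrK gtr0_norm //.
  by rewrite ltr_pdivrMr //; lra.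
have Fu : `|F t - F (t + e / 2)| < eta / 2.
  apply: Fe; rewrite /ball_ /= opprD addrA subrr sub0r normrN gtr0_norm //.
  by rewrite ltr_pdivrMr //; lra.
pose far n := [set w | e / 2 < `|Wn n w - W w|].
have mfar n : measurable (far n) by exact/measurable_cst_lt/measurable_fun_normB.
near=> n.
have farn : fine (P (far n)) < eta / 2.
  by near: n; exact: cvgr_lt (Wcvg _ e20) _ eta20.
have lower : F (t - e / 2) <= fine (P [set w | Wn n w <= t]) + fine (P (far n)).
  apply: fine_measure_le_subU (measurable_le_cst _ mW)
    (measurable_le_cst _ (mWn n)) (mfar n) _.
  move=> w /= Ww; have [|Wnw] := leP (Wn n w) t; [by left|right].
  by rewrite /far /= ltr_normr; apply/orP; left; lra.
have upper : fine (P [set w | Wn n w <= t]) <= F (t + e / 2) + fine (P (far n)).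
  apply: fine_measure_le_subU (measurable_le_cst _ (mWn n))
    (measurable_le_cst _ mW) (mfar n) _.
  move=> w /= Wnw; have [|Ww] := leP (W w) (t + e / 2); [by left|right].
  by rewrite /far /= ltr_normr; apply/orP; right; lra.
move: Fl Fu; rewrite !ltr_norml => /andP[? ?] /andP[? ?].
rewrite -/(F t); apply/andP; split; lra.
Unshelve. all: by end_near. Qed.

Lemma cvg_in_prob_dist_le (Vn Wn : nat -> T -> R) (W : T -> R) :
  (forall n, measurable_fun setT (Vn n)) ->
  (forall n, measurable_fun setT (Wn n)) -> measurable_fun setT W ->
  (forall n w, `|Vn n w - W w| <= `|Wn n w - W w|) ->
  cvg_in_prob P Wn W -> cvg_in_prob P Vn W.
Proof.
move=> mVn mWn mW VW /(cvg_in_probP mWn mW) Wcvg.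
apply/(cvg_in_probP mVn mW) => eps eps0.
apply: (squeeze_cvgr _ (cvg_cst (0 : R)) (Wcvg eps eps0)); apply: nearW => n.
rewrite fine_measure_ge0 /=; apply: fine_le_measure.
- exact/measurable_cst_lt/measurable_fun_normB.
- exact/measurable_cst_lt/measurable_fun_normB.
- by move=> w /= /lt_le_trans; apply.
Qed.

Lemma cvg_in_prob_majorant (Yn Zn : nat -> T -> R) (Y : T -> R) :
  (forall n, measurable_fun setT (Yn n)) ->
  (forall n, measurable_fun setT (Zn n)) -> measurable_fun setT Y ->
  (forall n w, Yn n w <= Zn n w) -> (forall n w, Y w <= Zn n w) ->
  (forall eps, 0 < eps ->
    (fun n => fine (P [set w | eps < Zn n w - Y w])) @ \oo --> 0) ->
  (forall eps, 0 < eps ->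
    (fun n => fine (P [set w | eps < Zn n w - Yn n w])) @ \oo --> 0) ->
  cvg_in_prob P Yn Y.
Proof.
move=> mYn mZn mY YnZ YZ ZYcvg ZYncvg; apply/(cvg_in_probP mYn mY) => eps eps0.
have sum_cvg : (fun n => fine (P [set w | eps < Zn n w - Y w]) +
    fine (P [set w | eps < Zn n w - Yn n w])) @ \oo --> 0.
  rewrite -[X in _ --> X]addr0; apply: cvgD; [exact: ZYcvg|exact: ZYncvg].
apply: (squeeze_cvgr _ (cvg_cst (0 : R)) sum_cvg); apply: nearW => n.
rewrite fine_measure_ge0 /=; apply: fine_measure_le_subU.
- exact/measurable_cst_lt/measurable_fun_normB.
- by apply: measurable_cst_lt; exact: measurable_funB.
- by apply: measurable_cst_lt; exact: measurable_funB.
move=> w /=; rewrite ltr_normr => /orP[gap|]; [left|rewrite opprB => gap; right].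
  by apply: lt_le_trans gap _; rewrite lerD2r.
by apply: lt_le_trans gap _; rewrite lerD2r.
Qed.

Lemma frechet_measurable W b : frechet_scale P (EFin \o W) b ->
  measurable_fun setT W.
Proof. by case=> /measurable_EFinP. Qed.

Lemma frechet_scale_ge0 W b : frechet_scale P (EFin \o W) b -> 0 <= b.
Proof. by case. Qed.

Lemma frechet_cdf W b t : frechet_scale P (EFin \o W) b -> 0 < t ->
  fine (P [set w | W w <= t]) = expR (- (b / t)).
Proof. by case=> _ _ cdf t0; rewrite cdf. Qed.

Lemma frechet_cdf_continuous W b t : frechet_scale P (EFin \o W) b -> 0 < t ->
  {for t, continuous (fun s => fine (P [set w | W w <= s]))}.
Proof.
move=> FW t0.
have cdfE : \forall s \near t, expR (- (b / s)) = fine (P [set w | W w <= s]).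
  by near=> s; rewrite (frechet_cdf FW) //; near: s; exact: cvgr_gt cvg_id _ t0.
apply: cvg_trans (near_eq_cvg cdfE) _; rewrite (frechet_cdf FW t0).
apply: (cvg_comp (fun s => - (b / s)) expR) _ (@continuous_expR R _).
by apply: cvgN; apply: cvgM; [exact: cvg_cst|apply: cvgV; rewrite ?gt_eqF].
Unshelve. all: by end_near. Qed.

Lemma cvg_in_prob_frechet_scale Wn W bn b :
  (forall n, frechet_scale P (EFin \o Wn n) (bn n)) ->
  frechet_scale P (EFin \o W) b -> cvg_in_prob P Wn W -> bn @ \oo --> b.
Proof.
move=> FWn FW Wcvg.
have cdf1 : (fun n => expR (- bn n)) @ \oo --> expR (- b).
  have := cvg_in_prob_cdf (fun n => frechet_measurable (FWn n))
    (frechet_measurable FW) Wcvg (frechet_cdf_continuous FW ltr01).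
  rewrite (frechet_cdf FW ltr01) divr1.
  by under eq_fun do rewrite (frechet_cdf (FWn _) ltr01) divr1.
have -> : bn = (fun x => - ln x) \o (fun n => expR (- bn n)).
  by apply/funext => n /=; rewrite expRK opprK.
rewrite -[b]opprK -[X in _ --> - X](expRK (- b)).
exact: cvg_comp cdf1 (cvgN (continuous_ln (expR_gt0 _))).
Qed.

Lemma frechet_between_le V Z a c t :
  frechet_scale P (EFin \o V) a -> frechet_scale P (EFin \o Z) c ->
  (forall w, V w <= Z w) -> 0 < t ->
  fine (P ([set w | V w <= t] `&` [set w | t < Z w])) <= `|a - c| / t.
Proof.
move=> FV FZ VZ t0.
have mZ := frechet_measurable FZ.
set D := _ `&` _.
have mD : measurable D.
  apply: measurableI; last exact: measurable_cst_lt.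
  exact: measurable_le_cst (frechet_measurable FV).
have splitV : [set w | V w <= t] = D `|` [set w | Z w <= t].
  apply/seteqP; split => [w /= Vw|w [[]//|/= Zw]]; last exact: le_trans (VZ w) Zw.
  by have [Zw|Zw] := leP (Z w) t; [right|left].
have DZ0 : D `&` [set w | Z w <= t] = set0.
  by apply/seteqP; split => // w [[_ /= tZ] /= Zt]; move: tZ; rewrite ltNge Zt.
have := fine_measureU mD (measurable_le_cst t mZ) DZ0.
rewrite -splitV (frechet_cdf FV t0) (frechet_cdf FZ t0) => cdfV.
have := expRN_sub_le_dist (divr_ge0 (frechet_scale_ge0 FV) (ltW t0))
  (divr_ge0 (frechet_scale_ge0 FZ) (ltW t0)).
by rewrite -mulrBl normrM [`|t^-1|]gtr0_norm ?invr_gt0 //; lra.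
Qed.

Lemma frechet_tail_le Z c M : frechet_scale P (EFin \o Z) c -> 0 < M ->
  fine (P [set w | M < Z w]) <= c / M.
Proof.
move=> FZ M0; have mZ := frechet_measurable FZ.
have splitT : [set: T] = [set w | M < Z w] `|` [set w | Z w <= M].
  by apply/seteqP; split => // w _; have [|] := ltP M (Z w); [left|right].
have disj : [set w | M < Z w] `&` [set w | Z w <= M] = set0.
  by apply/seteqP; split => // w [/= MZ ZM]; move: MZ; rewrite ltNge ZM.
have := fine_measureU (measurable_cst_lt M mZ) (measurable_le_cst M mZ) disj.
rewrite -splitT probability_setT (frechet_cdf FZ M0) /=.
by have := expR_ge1Dx (- (c / M)); lra.
Qed.

Lemma frechet_gap_le V Z a c eps dl M (N : nat) :
  frechet_scale P (EFin \o V) a -> frechet_scale P (EFin \o Z) c ->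
  (forall w, 0 <= V w) -> (forall w, V w <= Z w) ->
  0 < dl -> dl < eps -> 0 < M -> M <= N%:R * dl ->
  fine (P [set w | eps < Z w - V w]) <= c / M + N%:R * (`|a - c| / dl).
Proof.
move=> FV FZ V0 VZ dl0 dleps M0 MN.
have mV := frechet_measurable FV; have mZ := frechet_measurable FZ.
pose D (k : nat) :=
  [set w | V w <= k.+1%:R * dl] `&` [set w | k.+1%:R * dl < Z w].
have mD k : measurable (D k).
  by apply: measurableI; [exact: measurable_le_cst|exact: measurable_cst_lt].
have cover : [set w | eps < Z w - V w] `<=`
    [set w | M < Z w] `|` \big[setU/set0]_(k < N) D k.
  move=> w /= gap; have [|ZM] := ltP M (Z w); [by left|right].
  have VZw : V w + eps < Z w by lra.
  have [k Vk kZ] := grid_point_between (V0 w) dl0 dleps VZw (le_trans ZM MN).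
  by rewrite -bigcup_mkord; exists k; [exact: ltn_ord|split].
apply: le_trans (fine_measure_le_subU _ _ _ cover) _.
- by apply: measurable_cst_lt; exact: measurable_funB.
- exact: measurable_cst_lt.
- exact: bigsetU_measurable.
apply: lerD; first exact: frechet_tail_le.
apply: le_trans (fine_measure_bigsetU_le _ mD) _.
rewrite mulr_natl -[in X in _ <= X](card_ord N) -sumr_const.
apply: ler_sum => k _.
apply: le_trans (frechet_between_le FV FZ VZ (mulr_gt0 (ltr0Sn _ _) dl0)) _.
rewrite ler_wpM2l ?lef_pV2 ?posrE ?mulr_gt0 ?ltr0n //.
have k1 : (1 : R) <= k.+1%:R by rewrite ler1n.
nra.
Qed.

Lemma frechet_gap_cvg (Vn Zn : nat -> T -> R) (an cn : nat -> R) (b eps : R) :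
  (forall n, frechet_scale P (EFin \o Vn n) (an n)) ->
  (forall n, frechet_scale P (EFin \o Zn n) (cn n)) ->
  (forall n w, 0 <= Vn n w) -> (forall n w, Vn n w <= Zn n w) ->
  an @ \oo --> b -> cn @ \oo --> b -> 0 < eps ->
  (fun n => fine (P [set w | eps < Zn n w - Vn n w])) @ \oo --> 0.
Proof.
move=> FVn FZn V0 VZ ab cb eps0; apply/cvgrPdist_lt => eta eta0.
pose dl := eps / 2; have dl0 : 0 < dl by rewrite /dl; lra.
(* The tail beyond M and the N grid points each contribute less than eta / 4. *)
pose M := 4 * (`|b| + 1) / eta.
have M0 : 0 < M by rewrite /M; apply: divr_gt0 => //; lra.
pose N := (Num.truncn (M / dl)).+1.
have MN : M <= N%:R * dl.
  have /andP[_ /ltW] := truncn_itv (ltW (divr_gt0 M0 dl0)).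
  by rewrite ler_pdivrMr.
have N0 : 0 < N%:R :> R by rewrite ltr0n.
pose e := eta * dl / (4 * N%:R).
have e0 : 0 < e by rewrite /e; apply: divr_gt0; [apply: mulr_gt0|]; lra.
have cbound : \forall n \near \oo, cn n < `|b| + 1.
  by apply: cvgr_lt cb _ _; have := ler_norm b; lra.
have acclose : \forall n \near \oo, `|an n - cn n| < e.
  apply: filterS ((cvgrPdist_lt _ _).1 (cvgB ab cb) e e0) => n.
  by rewrite subrr sub0r normrN.
near=> n.
rewrite sub0r normrN ger0_norm ?fine_measure_ge0 //.
apply: le_lt_trans (frechet_gap_le (FVn n) (FZn n) (V0 n) (VZ n) dl0 _ M0 MN) _.
  by rewrite /dl; lra.
have tail : cn n / M < eta / 4.
  have -> : eta / 4 = (`|b| + 1) / M.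
    by rewrite /M; field; apply/andP; split; apply: lt0r_neq0 => //; lra.
  by rewrite ltr_pM2r ?invr_gt0 //; near: n.
have grid : N%:R * (`|an n - cn n| / dl) < eta / 4.
  have -> : eta / 4 = N%:R * (e / dl).
    by rewrite /e; field; apply/andP; split; apply: lt0r_neq0.
  by rewrite ltr_pM2l // ltr_pM2r ?invr_gt0 //; near: n.
lra.
Unshelve. all: by end_near. Qed.

End RealRandomVariables.

Section CRSMValues.
Context {R : realType} {E : topologicalType} {d : measure_display}
  {T : measurableType d} (P : probability T R) (X : T -> set E -> \bar R).
Hypothesis X_crsm : CRSM P X.

Let X_sup w : sup_measure (X w). Proof. by case: X_crsm => -[]. Qed.

Lemma crsm_frechet K : compact K ->
  frechet_scale P (EFin \o (fun w => fine (X w K))) (ecf P X K).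
Proof.
move=> cK; case: X_crsm => _ Xmax _.
have -> : EFin \o (fun w => fine (X w K)) = (fun w => X w K).
  by apply/funext => w /=; rewrite fineK // sup_measure_fin_num.
rewrite /ecf /tdf (_ : (fun w => ext_integral _ _) = fun w => X w K); last first.
  by apply/funext => w; exact: ext_integral_indic.
apply: xgetPex.
have [a Fa] := Xmax 1%N (fun _ => K) (fun _ => 1) (fun _ => cK) (fun _ => ler01).
exists a; move: Fa; congr (frechet_scale P _ a); apply/funext => w.
by rewrite big_ord_recl big_ord0 mul1e max_l // sup_measure_ge0.
Qed.

Lemma crsm_value_ge0 w A : 0 <= fine (X w A).
Proof. exact/fine_ge0/sup_measure_ge0. Qed.

Lemma crsm_value_le w K L : compact K -> compact L -> K `<=` L ->
  fine (X w K) <= fine (X w L).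
Proof.
move=> cK cL KL; rewrite -lee_fin !fineK ?sup_measure_fin_num //.
by case: (X_sup w) => mono _ _ _ _; exact: mono.
Qed.

Lemma crsm_dist_setU_le w K L : lchs_space (E := E) -> compact K -> compact L ->
  `|fine (X w (K `|` L)) - fine (X w L)| <= `|fine (X w K) - fine (X w L)|.
Proof.
move=> [lcE hE scE] cK cL; have cKL := compactU cK cL.
have : fine (X w (K `|` L)) <= Num.max (fine (X w K)) (fine (X w L)).
  rewrite -lee_fin EFin_max !fineK ?sup_measure_fin_num //.
  exact: sup_measure_compactU.
rewrite ger0_norm ?subr_ge0 ?(crsm_value_le w cL cKL (@subsetUr _ K L)) //.
rewrite le_max => /orP[KLK|KLL].
  by apply: le_trans (ler_norm _); rewrite lerD2r.
by apply: le_trans (normr_ge0 _); rewrite subr_le0.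
Qed.

End CRSMValues.

Theorem mainTheorem17 (R : realType) (E : topologicalType)
  (d : measure_display) (T : measurableType d) (P : probability T R)
  (X : T -> set E -> \bar R) (K : set E) (Kn : nat -> set E) :
  lchs_space (E := E) -> CRSM P X ->
  compact K -> (forall n, compact (Kn n)) ->
  (cvg_in_prob P (fun n w => fine (X w (Kn n))) (fun w => fine (X w K)) <->
   ((fun n => ecf P X (Kn n)) @ \oo --> ecf P X K /\
    (fun n => ecf P X (Kn n `|` K)) @ \oo --> ecf P X K)).
Proof.
move=> lchsE X_crsm cK cKn; have cKnK n : compact (Kn n `|` K) by exact: compactU.
pose Y w := fine (X w K); pose Yn n w := fine (X w (Kn n)).
pose Zn n w := fine (X w (Kn n `|` K)).
have FY : frechet_scale P (EFin \o Y) (ecf P X K) := crsm_frechet X_crsm cK.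
have FYn n : frechet_scale P (EFin \o Yn n) (ecf P X (Kn n)) :=
  crsm_frechet X_crsm (cKn n).
have FZn n : frechet_scale P (EFin \o Zn n) (ecf P X (Kn n `|` K)) :=
  crsm_frechet X_crsm (cKnK n).
have mY := frechet_measurable FY; have mYn n := frechet_measurable (FYn n).
have mZn n := frechet_measurable (FZn n).
have YZn n w : Y w <= Zn n w :=
  crsm_value_le X_crsm w cK (cKnK n) (@subsetUr _ (Kn n) K).
have YnZn n w : Yn n w <= Zn n w :=
  crsm_value_le X_crsm w (cKn n) (cKnK n) (@subsetUl _ (Kn n) K).
split=> [Ycvg|[ecf_Kn ecf_KnK]].
  split; first exact: cvg_in_prob_frechet_scale FYn FY Ycvg.
  have ZYn n w : `|Zn n w - Y w| <= `|Yn n w - Y w| :=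
    crsm_dist_setU_le X_crsm w lchsE (cKn n) cK.
  exact: cvg_in_prob_frechet_scale FZn FY (cvg_in_prob_dist_le mZn mYn mY ZYn Ycvg).
have X0 w A : 0 <= fine (X w A) := crsm_value_ge0 X_crsm w A.
apply: (cvg_in_prob_majorant mYn mZn mY YnZn YZn) => eps eps0.
  exact: frechet_gap_cvg (fun _ => FY) FZn (fun _ w => X0 w K) YZn
    (cvg_cst _) ecf_KnK eps0.
exact: frechet_gap_cvg FYn FZn (fun n w => X0 w (Kn n)) YnZn ecf_Kn ecf_KnK eps0.
Qed.
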